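(* Let $G$ be a locally compact abelian group, $K$ a compact subgroup, and $\Omega$ an open subgroup containing $K$. Consider the continuous map $$\Phi:\mathcal{S}(G)\to\mathcal{S}(\Omega)\times\mathcal{S}(G/K),\qquad H\mapsto\big(H\cap\Omega,\ (H+K)/K\big).$$ Let $R\in\mathcal{S}(\Omega)$ and let $M$ be a closed subgroup of $G$ containing $K$. Then the fiber $\Phi^{-1}(R,M/K)$ is either empty or homeomorphic to the compact group $\mathrm{Hom}\big((M+\Omega)/\Omega,\ K/(K\cap R)\big)$ (with the topology of pointwise convergence); in particular it is homogeneous.
   Context: $\mathcal{S}(X)$ denotes the space of closed subgroups of a locally compact group $X$ with the Chabauty topology (basic open sets $\{F: F\cap K'=\emptyset,\ F\cap U_i\ne\emptyset\ \forall i\}$, $K'$ compact, $U_i$ open). Homomorphisms are continuous; $(M+\Omega)/\Omega$ is discrete. *)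

From mathcomp Require Import all_boot all_order all_algebra.
From mathcomp Require Import all_classical all_reals all_analysis.
Set Implicit Arguments. Unset Strict Implicit. Unset Printing Implicit Defensive.
Import Order.TTheory GRing.Theory Num.Theory.
Local Open Scope classical_set_scope.
Local Open Scope ring_scope.

Section Defs.
Variable G : topologicalZmodType.

Definition is_subgroup (H : set G) : Prop :=
  H 0 /\ (forall x y, H x -> H y -> H (x - y)).

Definition closed_subgroup (H : set G) : Prop := is_subgroup H /\ closed H.

Definition SG : set (set G) := [set H | closed_subgroup H].

Definition setadd (A B : set G) : set G := [set a + b | a in A & b in B].

Definition coset (H : set G) (x : G) : set G := [set x + h | h in H].

(* (image of A in) G/H, cosets represented as subsets of G:  A/H = {a + H | a in A} *)
Definition quot (A H : set G) : set (set G) := [set coset H a | a in A].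

Definition fiber (K Om R M : set G) : set (set G) :=
  [set H | SG H /\ H `&` Om = R /\ quot (setadd H K) K = quot M K].
End Defs.

Section Top.
Variable A : Type.
Definition is_topology (T : set (set A)) : Prop :=
  T setT /\ (forall U V, T U -> T V -> T (U `&` V)) /\
  (forall F : set (set A), F `<=` T -> T (\bigcup_(U in F) U)).

Definition gen_open (S : set (set A)) : set (set A) :=
  [set U | forall T, is_topology T -> S `<=` T -> T U].
End Top.

Definition homeomorphic_sub (A B : Type) (opA : set (set A)) (X : set A)
  (opB : set (set B)) (Y : set B) : Prop :=
  exists (f : A -> B) (g : B -> A),
    (forall x, X x -> Y (f x)) /\ (forall y, Y y -> X (g y)) /\
    (forall x, X x -> g (f x) = x) /\ (forall y, Y y -> f (g y) = y) /\
    (forall V, opB V -> exists U, opA U /\ X `&` f @^-1` V = X `&` U) /\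
    (forall U, opA U -> exists V, opB V /\ Y `&` g @^-1` U = Y `&` V).

Section Spaces.
Variable G : topologicalZmodType.

(* Chabauty topology on subsets of G (subbasis); its trace on S(G) is the
   Chabauty topology of S(G) *)
Definition chabauty_subbasis : set (set (set G)) :=
  [set W | (exists C : set G, compact C /\ W = [set F | F `&` C = set0]) \/
           (exists U : set G, open U /\ W = [set F | F `&` U !=set0])].
Definition chabauty_open : set (set (set G)) := gen_open chabauty_subbasis.

Definition quot_open (K L : set G) : set (set (set G)) :=
  [set U | U `<=` quot K L /\
     exists V : set G, open V /\ [set k | K k /\ U (coset L k)] = K `&` V].

(* Hom(D, C) for D = (M+Om)/Om and C = K/(K ∩ R): group homomorphisms
   (automatically continuous since D is discrete), represented by maps on cosets,
   normalised to be set0 outside D *)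
Definition Hom_quot (M Om K R : set G) : set (set G -> set G) :=
  let D := quot (setadd M Om) Om in
  let C := quot K (K `&` R) in
  [set f | (forall X, D X -> C (f X)) /\
           (forall X Y, D X -> D Y -> f (setadd X Y) = setadd (f X) (f Y)) /\
           (forall X, ~ D X -> f X = set0)].

Definition pointwise_open (M Om K R : set G) : set (set (set G -> set G)) :=
  gen_open [set W | exists d U, quot (setadd M Om) Om d /\
                       quot_open K (K `&` R) U /\ W = [set f | U (f d)]].
End Spaces.

(* Fix H0 in the fiber. Every coset X of Om in M + Om meets H0, since H0 + K = M and
   K <= Om; choose rep X in H0 `&` X. Two points of H0 in a common coset of Om differ
   by an element of H0 `&` Om = R, so rep is additive modulo R. Hence for H in the
   fiber, {k in K | rep X + k in H} is a coset of K `&` R, and X |-> this coset is a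
   homomorphism (M + Om)/Om -> K/(K `&` R). Conversely a homomorphism f gives back H
   as the union over X of rep X + f X + R, and the two constructions are inverse.
   Continuity of the first map: the coset at X lies in an open set V of K iff H misses
   the compact set rep X + (K \ V). Continuity of the second map on the subbasic sets
   {F | F `&` C = set0}: a point of C outside the subgroup of f has a neighbourhood
   missed by the subgroups of all homomorphisms pointwise close to f, and compactness
   of C makes this uniform. *)
From mathcomp Require Import all_boot all_order all_algebra.
From mathcomp Require Import all_classical all_reals all_analysis.
Set Implicit Arguments. Unset Strict Implicit. Unset Printing Implicit Defensive.
Import GRing.Theory.
Local Open Scope classical_set_scope.
Local Open Scope ring_scope.

Lemma addKrA (V : zmodType) (a x y : V) : (a + x) - (a + y) = x - y.
Proof. by rewrite [a + x]addrC addrKA. Qed.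

Section Subgroup.
Variable G : topologicalZmodType.
Implicit Types (H : set G) (x y z a b : G).

Lemma subgroup0 H : is_subgroup H -> H 0. Proof. by case. Qed.

Lemma subgroupB H x y : is_subgroup H -> H x -> H y -> H (x - y).
Proof. by case=> _; apply. Qed.

Lemma subgroupN H x : is_subgroup H -> H x -> H (- x).
Proof. by move=> sH Hx; rewrite -sub0r; apply: subgroupB => //; apply: subgroup0. Qed.

Lemma subgroupD H x y : is_subgroup H -> H x -> H y -> H (x + y).
Proof. by move=> sH Hx Hy; rewrite -[y]opprK; apply: subgroupB => //; apply: subgroupN. Qed.

Lemma subgroupI H1 H2 : is_subgroup H1 -> is_subgroup H2 -> is_subgroup (H1 `&` H2).
Proof.
move=> s1 s2; split; first by split; apply: subgroup0.
by move=> x y [? ?] [? ?]; split; apply: subgroupB.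
Qed.

Lemma subgroup_setadd H1 H2 :
  is_subgroup H1 -> is_subgroup H2 -> is_subgroup (setadd H1 H2).
Proof.
move=> s1 s2; split.
  by exists 0; [apply: subgroup0 | exists 0; [apply: subgroup0 | rewrite addr0]].
move=> _ _ [a1 A1 [b1 B1 <-]] [a2 A2 [b2 B2 <-]].
exists (a1 - a2); first exact: subgroupB.
by exists (b1 - b2); [apply: subgroupB | rewrite opprD addrACA].
Qed.

Lemma subgroup_subrr H x : is_subgroup H -> H (x - x).
Proof. by move=> sH; rewrite subrr; apply: subgroup0. Qed.

Lemma subgroup_sub_trans H x y z : is_subgroup H -> H (x - y) -> H (y - z) -> H (x - z).
Proof. by move=> sH Hxy Hyz; rewrite -(subrKA y); apply: subgroupD. Qed.

Lemma subgroup_subD H x y a b :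
  is_subgroup H -> H (x - a) -> H (y - b) -> H (x + y - (a + b)).
Proof. by move=> sH Hx Hy; rewrite opprD addrACA; apply: subgroupD. Qed.

Lemma subgroup_subB H x y a b :
  is_subgroup H -> H (x - a) -> H (y - b) -> H (x - y - (a - b)).
Proof. by move=> sH Hx Hy; apply: subgroup_subD => //; rewrite -opprD; apply: subgroupN. Qed.

Lemma in_coset H a x : is_subgroup H -> coset H a x <-> H (x - a).
Proof.
move=> sH; split; first by case=> h Hh <-; rewrite addrC addKr.
by move=> Hx; exists (x - a) => //; rewrite addrC subrK.
Qed.

Lemma coset_refl H x : is_subgroup H -> coset H x x.
Proof. by move=> sH; apply/(in_coset _ _ sH); apply: subgroup_subrr. Qed.

Lemma coset_eqP H a b : is_subgroup H -> coset H a = coset H b <-> H (a - b).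
Proof.
move=> sH; split=> [eab|Hab].
  by have := coset_refl a sH; rewrite eab => /(in_coset _ _ sH).
apply/seteqP; split=> x /(in_coset _ _ sH) Hx; apply/(in_coset _ _ sH).
  exact: subgroup_sub_trans sH Hx Hab.
by apply: (subgroup_sub_trans sH Hx); rewrite -opprB; apply: subgroupN.
Qed.

Lemma coset_memE H a x : is_subgroup H -> coset H a x -> coset H a = coset H x.
Proof.
move=> sH /(in_coset _ _ sH) Hxa; apply/(coset_eqP _ _ sH).
by rewrite -opprB; apply: subgroupN.
Qed.

Lemma cosetB H c x y : is_subgroup H -> coset H c x -> coset H c y -> H (x - y).
Proof.
move=> sH /(in_coset _ _ sH) Hx /(in_coset _ _ sH) Hy.
by apply: (subgroup_sub_trans sH Hx); rewrite -opprB; apply: subgroupN.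
Qed.

Lemma coset0 H : is_subgroup H -> coset H 0 = H.
Proof.
move=> sH; apply/seteqP; split; first by move=> _ [h Hh <-]; rewrite add0r.
by move=> h Hh; exists h => //; rewrite add0r.
Qed.

Lemma setadd_coset H a b : is_subgroup H ->
  setadd (coset H a) (coset H b) = coset H (a + b).
Proof.
move=> sH; apply/seteqP; split.
  move=> _ [_ [h1 H1 <-] [_ [h2 H2 <-] <-]].
  by exists (h1 + h2); [apply: subgroupD | rewrite addrACA].
move=> _ [h Hh <-]; exists (a + h); first by exists h.
by exists b; [apply: coset_refl | rewrite addrAC].
Qed.

End Subgroup.

Section GeneratedTopology.
Variable A : Type.

Lemma gen_open_topology (SB : set (set A)) : is_topology (gen_open SB).
Proof.
split; [|split].
- by move=> T [? _] _.
- move=> U V gU gV T tT sT; case: (tT) => _ [TI _].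
  by apply: TI; [apply: gU | apply: gV].
- move=> F sF T tT sT; case: (tT) => _ [_ TU]; apply: TU => U FU.
  exact: sF FU T tT sT.
Qed.

Lemma gen_open_subbasis (SB : set (set A)) : SB `<=` gen_open SB.
Proof. by move=> U SU T _ sT; apply: sT. Qed.

Lemma topology_setT (T : set (set A)) : is_topology T -> T setT.
Proof. by case. Qed.

Lemma topology_bigcup (T : set (set A)) F :
  is_topology T -> F `<=` T -> T (\bigcup_(U in F) U).
Proof. by case=> _ [_ TU]; apply: TU. Qed.

End GeneratedTopology.

Definition preimage_trace_open (A B : Type) (opA : set (set A)) (X : set A)
    (f : A -> B) (V : set B) : Prop :=
  exists U, opA U /\ X `&` f @^-1` V = X `&` U.

Lemma preimage_trace_open_gen (A B : Type) (opA : set (set A)) (X : set A)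
    (SB : set (set B)) (f : A -> B) :
  is_topology opA -> (forall V, SB V -> preimage_trace_open opA X f V) ->
  forall V, gen_open SB V -> preimage_trace_open opA X f V.
Proof.
move=> tA hSB V gV; apply: (gV [set V | preimage_trace_open opA X f V]) => //.
split; [|split].
- by exists setT; split; [exact: topology_setT | rewrite !setIT].
- move=> U V' [U1 [op1 e1]] [U2 [op2 e2]]; exists (U1 `&` U2); split.
    by case: tA => _ [TI _]; apply: TI.
  by rewrite preimage_setI -{1}(setIid X) setIACA e1 e2 setIACA setIid.
- move=> F sF.
  exists (\bigcup_(U in [set U | opA U /\ exists V', F V' /\ X `&` f @^-1` V' = X `&` U]) U).
  split; first by apply: topology_bigcup => // U [].
  apply/seteqP; split.
    move=> a [Xa [V' FV' V'a]]; split => //.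
    have [U [oU eU]] := sF V' FV'.
    have [_ Ua] : (X `&` U) a by rewrite -eU.
    by exists U => //; split => //; exists V'.
  move=> a [Xa [U [oU [V' [FV' eU]]] Ua]]; split => //.
  have [_ fa] : (X `&` f @^-1` V') a by rewrite eU.
  by exists V'.
Qed.

Lemma preimage_trace_open_local (A B : Type) (opA : set (set A)) (X : set A)
    (W : set B) (f : A -> B) : is_topology opA ->
  (forall a, X a -> W (f a) ->
     exists U, opA U /\ U a /\ forall a', X a' -> U a' -> W (f a')) ->
  preimage_trace_open opA X f W.
Proof.
move=> tA h.
exists (\bigcup_(U in [set U | opA U /\ forall a', X a' -> U a' -> W (f a')]) U).
split; first by apply: topology_bigcup => // U [].
apply/seteqP; split.
  move=> a [Xa Wa]; split => //; have [U [oU [Ua hU]]] := h a Xa Wa.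
  by exists U.
by move=> a [Xa [U [oU hU] Ua]]; split => //; apply: hU.
Qed.

Lemma open_local (T : topologicalType) (A : set T) :
  (forall x, A x -> exists V, open V /\ V x /\ V `<=` A) -> open A.
Proof.
move=> h; rewrite openE => x Ax; have [V [oV [Vx VA]]] := h x Ax.
by apply: filterS VA _; apply: open_nbhs_nbhs.
Qed.

Section TopologicalSubgroup.
Variable G : topologicalZmodType.

Lemma addr_continuous (a : G) : continuous (fun x : G => x + a).
Proof.
move=> x; apply: (@continuous_comp _ _ _ (fun x : G => (x, a)) (fun x : G * G => x.1 + x.2)).
  by apply: cvg_pair; [exact: cvg_id | exact: cvg_cst].
exact: add_continuous.
Qed.

Lemma open_addr (U : set G) (a : G) : open U -> open [set x | U (x + a)].
Proof. by move=> oU; apply: open_comp => // x _; apply: addr_continuous. Qed.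

Lemma open_coset (H : set G) a : is_subgroup H -> open H -> open (coset H a).
Proof.
move=> sH oH; have -> : coset H a = [set x | H (x + - a)].
  by apply/seteqP; split => x /(in_coset _ _ sH).
exact: open_addr.
Qed.

Lemma open_subgroup_closed (H : set G) : is_subgroup H -> open H -> closed H.
Proof.
move=> sH oH; rewrite -openC; apply: open_local => x nHx.
exists (coset H x); split; first exact: open_coset.
split; first exact: coset_refl.
move=> y /(in_coset _ _ sH) Hyx Hy; apply: nHx.
by rewrite -(subKr y x); apply: subgroupB.
Qed.

Lemma open_setadd_subgroup (H O : set G) : is_subgroup O -> open O ->
  open (setadd H O).
Proof.
move=> sO oO; apply: open_local => x [h Hh [w Ow <-]].
exists (coset O (h + w)); split; first exact: open_coset.
split; first exact: coset_refl.
move=> y /(in_coset _ _ sO) Oy; exists h => //.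
exists (w + (y - (h + w))); first exact: subgroupD.
by rewrite addrA subrKC.
Qed.

End TopologicalSubgroup.

Section Fiber.
Variable G : topologicalZmodType.
Variables K Om R M H0 : set G.
Hypotheses (sgK : is_subgroup K) (sgOm : is_subgroup Om) (sgR : is_subgroup R)
  (sgM : is_subgroup M).
Hypotheses (sKOm : K `<=` Om) (sROm : R `<=` Om) (sKM : K `<=` M).
Hypothesis fiberH0 : fiber K Om R M H0.

Let S := setadd M Om.
Let D := quot S Om.
Let L := K `&` R.
Let Hom := Hom_quot M Om K R.
Let sgS : is_subgroup S. Proof. exact: subgroup_setadd. Qed.
Let sgL : is_subgroup L. Proof. exact: subgroupI. Qed.

Lemma fiber_subgroup H : fiber K Om R M H -> is_subgroup H.
Proof. by case=> [[]]. Qed.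

Lemma fiber_setadd H : fiber K Om R M H -> setadd H K = M.
Proof.
case=> [[sH _] [_ eq]]; apply/seteqP; split.
  move=> x Hx; have : quot (setadd H K) K (coset K x) by exists x.
  rewrite eq => -[m Mm /(coset_eqP _ _ sgK) Kmx].
  by rewrite -(subrK m x) addrC; apply: subgroupD => //; apply: sKM;
    rewrite -opprB; apply: subgroupN.
move=> m Mm; have : quot M K (coset K m) by exists m.
rewrite -eq => -[_ [h Hh [k Kk <-]] /(coset_eqP _ _ sgK) Kx].
exists h => //; exists (k - (h + k - m)); first exact: subgroupB.
by rewrite opprB addrA subrKC.
Qed.

Lemma fiber_R H x : fiber K Om R M H -> H x -> Om x -> R x.
Proof. by case=> _ [e _] Hx Ox; rewrite -e. Qed.

Lemma R_fiber H x : fiber K Om R M H -> R x -> H x.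
Proof. by case=> _ [e _] Rx; move: Rx; rewrite -e => -[]. Qed.

Lemma fiber_M H x : fiber K Om R M H -> H x -> M x.
Proof.
move=> fH Hx; rewrite -(fiber_setadd fH); exists x => //; exists 0.
  exact: subgroup0. by rewrite addr0.
Qed.

Lemma S_M x : M x -> S x.
Proof. by move=> Mx; exists x => //; exists 0; [exact: subgroup0 | rewrite addr0]. Qed.

Lemma S_Om x : Om x -> S x.
Proof. by move=> Ox; exists 0; [exact: subgroup0 | exists x => //; rewrite add0r]. Qed.

Lemma D_coset x : S x -> D (coset Om x).
Proof. by move=> Sx; exists x. Qed.

Lemma D_memE X x : D X -> X x -> S x /\ X = coset Om x.
Proof.
case=> a Sa <- Xx; split; last exact: coset_memE.
move: Xx => /(in_coset _ _ sgOm) Oxa.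
by rewrite -(subrK a x); apply: subgroupD => //; apply: S_Om.
Qed.

Lemma D_Om : D Om.
Proof. by rewrite -(coset0 sgOm); apply: D_coset; apply: S_M; apply: subgroup0. Qed.

Lemma D_setadd X Y : D X -> D Y -> D (setadd X Y).
Proof.
case=> a Sa <- [b Sb <-]; rewrite setadd_coset //; apply: D_coset.
exact: subgroupD.
Qed.

Lemma D_subOm X x y : D X -> X x -> X y -> Om (x - y).
Proof.
move=> DX Xx; have [_ ->] := D_memE DX Xx; move=> /(in_coset _ _ sgOm) Oyx.
by rewrite -opprB; apply: subgroupN.
Qed.

Lemma D_addOm X a b : D X -> X a -> Om b -> X (a + b).
Proof.
move=> DX Xa Ob; have [_ ->] := D_memE DX Xa; apply/(in_coset _ _ sgOm).
by rewrite addrAC subrr add0r.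
Qed.

Definition rep X := xget 0 (H0 `&` X).

Lemma repP X : D X -> H0 (rep X) /\ X (rep X).
Proof.
move=> DX; apply: (@xgetPex _ 0 (H0 `&` X)).
case: DX => _ [m Mm [w Ow <-]] <-.
rewrite -(fiber_setadd fiberH0) in Mm; case: Mm => h Hh [k Kk ek].
exists h; split => //; apply/(in_coset _ _ sgOm).
rewrite -ek -addrA opprD addNKr.
by apply: subgroupN => //; apply: subgroupD => //; apply: sKOm.
Qed.

Lemma rep_Om : R (rep Om).
Proof. by have [H0r Omr] := repP D_Om; apply: fiber_R fiberH0 _ _. Qed.

Lemma rep_setadd X Y : D X -> D Y -> R (rep (setadd X Y) - (rep X + rep Y)).
Proof.
move=> DX DY; have DXY := D_setadd DX DY; have sgH0 := fiber_subgroup fiberH0.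
have [H0x Xx] := repP DX; have [H0y Yy] := repP DY; have [H0xy XYxy] := repP DXY.
apply: (fiber_R fiberH0); first by apply: subgroupB => //; apply: subgroupD.
by apply: D_subOm DXY XYxy _; exists (rep X) => //; exists (rep Y).
Qed.

Definition to_hom (H X : set G) : set G := [set k | D X /\ K k /\ H (rep X + k)].

Definition of_hom (f : set G -> set G) : set G :=
  [set x | exists X, D X /\ exists2 k, f X k & R (x - (rep X + k))].

Lemma fiber_rep_addK H X : fiber K Om R M H -> D X -> exists2 k, K k & H (rep X + k).
Proof.
move=> fH DX; have [H0r _] := repP DX.
have := fiber_M fiberH0 H0r; rewrite -(fiber_setadd fH) => -[h Hh [k Kk e]].
by exists (- k); [exact: subgroupN | rewrite -e addrK].
Qed.

Lemma to_hom_coset H X k0 : fiber K Om R M H -> D X -> K k0 -> H (rep X + k0) ->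
  to_hom H X = coset L k0.
Proof.
move=> fH DX Kk0 Hk0; have sH := fiber_subgroup fH; apply/seteqP; split.
  move=> k [_ [Kk Hk]]; apply/(in_coset _ _ sgL).
  have Kd : K (k - k0) by apply: subgroupB.
  split => //; apply: (fiber_R fH); last exact: sKOm.
  by rewrite -(addKrA (rep X)); apply: subgroupB.
move=> k /(in_coset _ _ sgL) [Kd Rd]; split => //; split.
  by rewrite -(subrK k0 k); apply: subgroupD.
by rewrite -(subrK k0 k) addrCA; apply: subgroupD => //; apply: R_fiber fH _.
Qed.

Lemma to_hom_Hom H : fiber K Om R M H -> Hom (to_hom H).
Proof.
move=> fH; have sH := fiber_subgroup fH; split; [|split].
- move=> X DX; have [k0 Kk0 Hk0] := fiber_rep_addK fH DX.
  by exists k0 => //; rewrite (to_hom_coset fH DX Kk0 Hk0).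
- move=> X Y DX DY.
  have [k1 Kk1 Hk1] := fiber_rep_addK fH DX; have [k2 Kk2 Hk2] := fiber_rep_addK fH DY.
  rewrite (to_hom_coset fH DX Kk1 Hk1) (to_hom_coset fH DY Kk2 Hk2) setadd_coset //.
  apply: to_hom_coset => //; [exact: D_setadd | exact: subgroupD |].
  rewrite -[t in H t](subrKA (rep X + rep Y)) [rep X + rep Y + _]addrACA.
  apply: (subgroupD sH); first exact: R_fiber fH (rep_setadd DX DY).
  exact: subgroupD.
- by move=> X nDX; apply/seteqP; split => // k [].
Qed.

Lemma homD f X Y : Hom f -> D X -> D Y -> f (setadd X Y) = setadd (f X) (f Y).
Proof. by case=> _ [fD _]; apply: fD. Qed.

Lemma hom_set0 f X : Hom f -> ~ D X -> f X = set0.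
Proof. by case=> _ [_ f0]; apply: f0. Qed.

Lemma hom_coset f X : Hom f -> D X -> exists2 c, K c & f X = coset L c.
Proof. by case=> fC _ DX; case: (fC X DX) => c Kc <-; exists c. Qed.

Lemma hom_K f X k : Hom f -> D X -> f X k -> K k.
Proof.
move=> hf DX; have [c Kc ->] := hom_coset hf DX.
by case=> l [Kl _] <-; apply: subgroupD.
Qed.

Lemma hom_diff f X k k' : Hom f -> D X -> f X k -> f X k' -> L (k - k').
Proof. by move=> hf DX; have [c Kc ->] := hom_coset hf DX; apply: cosetB. Qed.

Lemma hom_Om f : Hom f -> f Om = L.
Proof.
move=> hf; have [c Kc e] := hom_coset hf D_Om.
have OmOm : setadd Om Om = Om by rewrite -(coset0 sgOm) setadd_coset // addr0.
have := homD hf D_Om D_Om; rewrite OmOm e setadd_coset // => /(coset_eqP _ _ sgL).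
rewrite opprD addrA subrr add0r => /(subgroupN sgL); rewrite opprK => Lc.
by rewrite -[RHS](coset0 sgL); apply/(coset_eqP _ _ sgL); rewrite subr0.
Qed.

Lemma of_hom_mem f X k x : Hom f -> D X -> f X k -> R (x - (rep X + k)) -> X x.
Proof.
move=> hf DX fk Rx; have [_ Xr] := repP DX.
rewrite -(subrK (rep X + k) x) addrC -addrA; apply: D_addOm => //.
by apply: (subgroupD sgOm); [exact: sKOm (hom_K hf DX fk) | exact: sROm].
Qed.

Lemma of_homP f X x : Hom f -> D X -> X x ->
  of_hom f x <-> exists2 k, f X k & R (x - (rep X + k)).
Proof.
move=> hf DX Xx; split; last by move=> [k fk Rk]; exists X; split => //; exists k.
case=> X' [DX' [k fk Rk]]; have X'x := of_hom_mem hf DX' fk Rk.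
have [_ e] := D_memE DX Xx; have [_ e'] := D_memE DX' X'x.
by rewrite e -e'; exists k.
Qed.

Lemma of_hom_S f x : Hom f -> of_hom f x -> S x.
Proof. by move=> hf [X [DX [k fk Rk]]]; case: (D_memE DX (of_hom_mem hf DX fk Rk)). Qed.

Lemma of_hom_subgroup f : Hom f -> is_subgroup (of_hom f).
Proof.
move=> hf; split.
  exists Om; split; first exact: D_Om.
  exists 0; first by rewrite hom_Om //; apply: subgroup0.
  by rewrite addr0 sub0r; apply: subgroupN => //; apply: rep_Om.
move=> x y [X [DX [k1 f1 R1]]] [Y [DY [k2 f2 R2]]].
have [Sx eX] := D_memE DX (of_hom_mem hf DX f1 R1).
have [Sy eY] := D_memE DY (of_hom_mem hf DY f2 R2).
set Z := coset Om (x - y); have DZ : D Z by apply: D_coset; apply: subgroupB.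
have eZY : setadd Z Y = X by rewrite eY eX setadd_coset // subrK.
move: f1; rewrite -eZY homD // => -[kz fz [ky fy ek]].
exists Z; split => //; exists kz => //.
(* modulo R: x - y = (rep X + k1) - (rep Y + k2) = (rep Z + rep Y + k1) - (rep Y + ky) *)
apply: (subgroup_sub_trans sgR (subgroup_subB sgR R1 R2)).
rewrite -(addrK (rep Y + ky) (rep Z + kz)) addrACA -ek.
apply: subgroup_subB => //; apply: subgroup_subD => //.
- by rewrite -eZY; apply: rep_setadd.
- exact: subgroup_subrr.
- exact: subgroup_subrr.
- by have [_] := hom_diff hf DY f2 fy.
Qed.

Lemma of_hom_Om f : Hom f -> of_hom f `&` Om = R.
Proof.
move=> hf; apply/seteqP; split.
  move=> x [fx Omx]; move/(of_homP hf D_Om Omx): fx => -[k].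
  rewrite hom_Om // => -[_ Rk] Rx.
  rewrite -(subrK (rep Om + k) x); apply: subgroupD => //.
  by apply: subgroupD => //; apply: rep_Om.
move=> x Rx; split; last exact: sROm.
apply/(of_homP hf D_Om (sROm Rx)); exists 0; first by rewrite hom_Om //; apply: subgroup0.
by rewrite addr0; apply: subgroupB => //; apply: rep_Om.
Qed.

Lemma of_hom_setadd f : Hom f -> setadd (of_hom f) K = M.
Proof.
move=> hf; apply/seteqP; split.
  move=> _ [x [X [DX [k fk Rk]]] [k' Kk' <-]]; apply: subgroupD => //; last exact: sKM.
  rewrite -(subrK (rep X + k) x); apply: subgroupD => //.
    exact: fiber_M fiberH0 (R_fiber fiberH0 Rk).
  apply: subgroupD => //; last exact: sKM (hom_K hf DX fk).
  by apply: fiber_M fiberH0 _; case: (repP DX).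
move=> m Mm; set X := coset Om m; have DX : D X by apply: D_coset; apply: S_M.
have [H0r Xr] := repP DX.
move: (Mm); rewrite -(fiber_setadd fiberH0) => -[h Hh [k' Kk' ehm]].
have Xh : X h.
  apply/(in_coset _ _ sgOm); rewrite -ehm opprD addrA subrr add0r.
  by apply: subgroupN => //; apply: sKOm.
have [c Kc efX] := hom_coset hf DX.
exists (h + c).
  exists X; split => //; exists c; first by rewrite efX; apply: coset_refl.
  rewrite [rep X + c]addrC addrKA; apply: (fiber_R fiberH0).
    exact: subgroupB (fiber_subgroup fiberH0) Hh H0r.
  exact: D_subOm DX Xh Xr.
exists (k' - c); first exact: subgroupB.
by rewrite -ehm -addrA subrKC.
Qed.

Lemma to_homK H : fiber K Om R M H -> of_hom (to_hom H) = H.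
Proof.
move=> fH; have sH := fiber_subgroup fH; apply/seteqP; split.
  move=> x [X [DX [k [_ [Kk Hk]] Rx]]].
  by rewrite -(subrK (rep X + k) x); apply: subgroupD => //; apply: R_fiber fH _.
move=> x Hx; set X := coset Om x.
have DX : D X by apply: D_coset; apply: S_M; apply: fiber_M fH Hx.
have [k0 Kk0 Hk0] := fiber_rep_addK fH DX; have [_ Xr] := repP DX.
exists X; split => //; exists k0; first by [].
apply: (fiber_R fH); first exact: subgroupB.
by apply: (D_subOm DX (coset_refl _ sgOm)); apply: D_addOm => //; apply: sKOm.
Qed.

Lemma of_homK f : Hom f -> to_hom (of_hom f) = f.
Proof.
move=> hf; apply: funext => X; have [DX|nDX] := pselect (D X); last first.
  by rewrite (hom_set0 hf nDX); apply/seteqP; split => // k [].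
have [_ Xr] := repP DX; have [c Kc efX] := hom_coset hf DX.
have XrK k : K k -> X (rep X + k) by move=> Kk; apply: D_addOm => //; apply: sKOm.
apply/seteqP; split.
  move=> k [_ [Kk /(of_homP hf DX (XrK _ Kk)) [k' fk' Rk]]].
  have Kk' := hom_K hf DX fk'; rewrite addKrA in Rk.
  move: fk'; rewrite efX => /(in_coset _ _ sgL) [Kd Rd]; apply/(in_coset _ _ sgL).
  split; last exact: subgroup_sub_trans sgR Rk Rd.
  by apply: (subgroup_sub_trans sgK _ Kd); apply: subgroupB.
move=> k fk; have Kk := hom_K hf DX fk; split => //; split => //.
apply/(of_homP hf DX (XrK _ Kk)); exists k => //.
exact: subgroup_subrr.
Qed.

Hypotheses (cK : compact K) (oOm : open Om) (clR : closed R).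

Let closedS : closed S.
Proof. by apply: open_subgroup_closed => //; apply: open_setadd_subgroup. Qed.

Lemma of_hom_closed f : Hom f -> closed (of_hom f).
Proof.
move=> hf; rewrite -openC; apply: open_local => y nfy.
have [Sy|nSy] := pselect (S y); last first.
  exists (~` S); split; first by rewrite openC.
  by split => // z nSz /(of_hom_S hf).
set X := coset Om y; have DX : D X by apply: D_coset.
have [c Kc efX] := hom_coset hf DX.
have fc : f X c by rewrite efX; apply: coset_refl.
exists (X `&` [set z | (~` R) (z + - (rep X + c))]); split.
  by apply: openI; [exact: open_coset | apply: open_addr; rewrite openC].
split.
  split; first exact: coset_refl.
  by move=> Ry; apply: nfy; apply/(of_homP hf DX (coset_refl _ sgOm)); exists c.
move=> z [Xz nRz] /(of_homP hf DX Xz) [k fk Rk]; apply: nRz.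
have [_ Rkc] := hom_diff hf DX fk fc.
by apply: (subgroup_sub_trans sgR Rk); rewrite addKrA.
Qed.

Lemma of_hom_fiber f : Hom f -> fiber K Om R M (of_hom f).
Proof.
move=> hf; split; first by split; [exact: of_hom_subgroup | exact: of_hom_closed].
by split; [exact: of_hom_Om | rewrite of_hom_setadd].
Qed.

Lemma quot_open_meets (N : set G) : open N ->
  quot_open K L [set q | quot K L q /\ q `&` N !=set0].
Proof.
move=> oN; split; first by move=> q [].
exists (\bigcup_(l in L) [set y | N (y + l)]); split.
  by apply: bigcup_open => l _; apply: open_addr.
apply/seteqP; split.
  move=> k [Kk [_ [k' [ck' Nk']]]]; split => //.
  by exists (k' - k); [move/(in_coset _ _ sgL): ck' | rewrite /= subrKC].
move=> k [Kk [l Ll Nkl]]; split => //; split; first by exists k.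
by exists (k + l); split => //; exists l.
Qed.

Lemma to_hom_continuous V : pointwise_open M Om K R V ->
  preimage_trace_open (@chabauty_open G) (fiber K Om R M) to_hom V.
Proof.
apply: preimage_trace_open_gen; first exact: gen_open_topology.
move=> _ [d [U [Dd [[_ [V0 [oV0 eV]]] ->]]]].
have UV0 k : K k -> U (coset L k) <-> V0 k.
  move=> Kk; have [h1 h2] : (K `&` V0) k <-> K k /\ U (coset L k) by rewrite -eV.
  by split => [Uk|V0k]; [case: (h2 (conj Kk Uk)) | case: (h1 (conj Kk V0k))].
set C := (fun k => k + rep d) @` (K `&` ~` V0).
exists [set F | F `&` C = set0]; split.
  apply: gen_open_subbasis; left; exists C; split => //.
  apply: continuous_compact; first by apply: continuous_subspaceT; apply: addr_continuous.
  by apply: compact_closedI => //; apply: open_closedC.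
apply/seteqP; split => H [fH h]; split => //=; have [k0 Kk0 Hk0] := fiber_rep_addK fH Dd.
  move: h; rewrite /= (to_hom_coset fH Dd Kk0 Hk0) => /(UV0 _ Kk0) V0k0.
  apply/seteqP; split => // y [Hy [k [Kk nV0k] eky]]; apply: nV0k.
  have : to_hom H d k by split => //; split => //; rewrite addrC eky.
  rewrite (to_hom_coset fH Dd Kk0 Hk0) => /(coset_memE sgL) e.
  by apply/(UV0 _ Kk); rewrite -e; apply/(UV0 _ Kk0).
rewrite (to_hom_coset fH Dd Kk0 Hk0); apply/(UV0 _ Kk0); apply: contrapT => nV0k0.
have : (H `&` C) (k0 + rep d) by split; [rewrite addrC | exists k0].
by rewrite h.
Qed.

Definition hom_nbhs (f0 : set G -> set G) : set_system (set G -> set G) :=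
  [set P | exists U, pointwise_open M Om K R U /\ U f0 /\ forall g, U g -> Hom g -> P g].

Lemma hom_nbhs_filter f0 : Filter (hom_nbhs f0).
Proof.
have [PWT [PWI _]] : is_topology (pointwise_open M Om K R) := gen_open_topology _.
constructor.
- by exists setT.
- move=> P Q [U1 [oU1 [U1f h1]]] [U2 [oU2 [U2f h2]]]; exists (U1 `&` U2).
  by split; [exact: PWI | split => // g [? ?] hg; split; [apply: h1 | apply: h2]].
- move=> P Q PQ [U [oU [Uf h]]]; exists U; split => //; split => // g Ug hg.
  exact/PQ/h.
Qed.

Lemma of_hom_avoid_near f0 c : Hom f0 -> ~ of_hom f0 c ->
  \forall c' \near c & g \near hom_nbhs f0, Hom g -> ~ of_hom g c'.
Proof.
move=> hf0 nfc; have hom_nbhsF := hom_nbhs_filter f0.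
have [Sc|nSc] := pselect (S c); last first.
  exists (~` S, setT) => /=; last by move=> [c' g] [/= nSc' _] hg /(of_hom_S hg).
  by split; [apply: open_nbhs_nbhs; split => //; rewrite openC | exact: filterT].
set X := coset Om c; have DX : D X by apply: D_coset.
have [c0 Kc0 ef0X] := hom_coset hf0 DX.
pose phi p := p.1 - p.2 - rep X.
have phiE p : phi p = p.1 - (rep X + p.2) by rewrite /phi opprD addrA addrAC.
have phic : continuous phi.
  move=> p; apply: (@continuous_comp _ _ _ (fun p : G * G => p.1 - p.2) (fun x => x - rep X)).
    exact: sub_continuous.
  exact: addr_continuous.
have nRphi : nbhs (phi (c, c0)) (~` R).
  apply: open_nbhs_nbhs; split; first by rewrite openC.
  rewrite phiE => Rc; apply: nfc; apply/(of_homP hf0 DX (coset_refl _ sgOm)).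
  by exists c0 => //; rewrite ef0X; apply: coset_refl.
have [[A N] [/= nA nN] sAN] := phic (c, c0) _ nRphi.
move: nN; rewrite nbhsE => -[N' [oN' N'c0] sN'N].
exists (A `&` X, [set g | Hom g -> quot K L (g X) /\ g X `&` N' !=set0]) => /=.
  split.
    apply: filterI => //; apply: open_nbhs_nbhs.
    by split; [exact: open_coset | exact: coset_refl].
  exists [set g | quot K L (g X) /\ g X `&` N' !=set0]; split.
    apply: gen_open_subbasis; exists X, [set q | quot K L q /\ q `&` N' !=set0].
    by split => //; split => //; apply: quot_open_meets.
  split; last by move=> g Ug _.
  split; first exact: (proj1 hf0) X DX.
  by exists c0; split => //; rewrite ef0X; apply: coset_refl.
move=> [c' g] [[Ac' Xc'] Ug] /= hg /(of_homP hg DX Xc') [k gk Rk].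
have [_ [k1 [gk1 N'k1]]] := Ug hg.
have [_ Rkk1] := hom_diff hg DX gk gk1.
apply: (sAN (c', k1) (conj Ac' (sN'N _ N'k1))); rewrite phiE /=.
by apply: (subgroup_sub_trans sgR Rk); rewrite addKrA.
Qed.

Lemma of_hom_misses_open C : compact C ->
  preimage_trace_open (pointwise_open M Om K R) Hom of_hom [set F | F `&` C = set0].
Proof.
move=> cC; apply: preimage_trace_open_local; first exact: gen_open_topology.
move=> f0 hf0 eC.
have [|U [oU [Uf0 hU]]] := (compact_near_coveringP C).1 cC _ (hom_nbhs f0)
    (fun g c => Hom g -> ~ of_hom g c) (hom_nbhs_filter f0).
  move=> c Cc; apply: of_hom_avoid_near => // fc.
  by have : (of_hom f0 `&` C) c by []; rewrite eC.
exists U; split => //; split => // g hg Ug.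
by apply/seteqP; split => // x [fx Cx]; exact: (hU g Ug hg x Cx hg fx).
Qed.

Lemma of_hom_meets_open U : open U ->
  preimage_trace_open (pointwise_open M Om K R) Hom of_hom [set F | F `&` U !=set0].
Proof.
move=> oU; apply: preimage_trace_open_local; first exact: gen_open_topology.
move=> f0 hf0 [x [[X [DX [k fk Rk]]] Ux]].
set r := x - (rep X + k) in Rk.
set V := [set k' | U (k' + (rep X + r))].
exists [set g | quot K L (g X) /\ g X `&` V !=set0]; split; [|split].
- apply: gen_open_subbasis; exists X, [set q | quot K L q /\ q `&` V !=set0].
  by split => //; split => //; apply: quot_open_meets; apply: open_addr.
- split; first exact: (proj1 hf0) X DX.
  by exists k; split => //; rewrite /V /= /r addrA [k + _]addrC subrKC.
- move=> g hg [_ [k' [gk' Uk']]]; exists (k' + (rep X + r)); split => //.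
  exists X; split => //; exists k' => //.
  by rewrite addrCA addKrA [k' + r]addrC addrK.
Qed.

Lemma of_hom_continuous W : chabauty_open W ->
  preimage_trace_open (pointwise_open M Om K R) Hom of_hom W.
Proof.
apply: preimage_trace_open_gen; first exact: gen_open_topology.
by move=> _ [[C [cC ->]] | [U [oU ->]]]; [exact: of_hom_misses_open | exact: of_hom_meets_open].
Qed.

End Fiber.

Theorem proposition5p1 (G : topologicalZmodType)
  (HG : hausdorff_space G) (LC : locally_compact [set: G])
  (K Om R M : set G) :
  is_subgroup K -> compact K ->
  is_subgroup Om -> open Om -> K `<=` Om ->
  is_subgroup R -> R `<=` Om -> (exists C : set G, closed C /\ R = C `&` Om) ->
  closed_subgroup M -> K `<=` M ->
  fiber K Om R M = set0 \/
  homeomorphic_sub (@chabauty_open G) (fiber K Om R M)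
                   (pointwise_open M Om K R) (Hom_quot M Om K R).
Proof.
move=> sgK cK sgOm oOm sKOm sgR sROm [C [clC eR]] [sgM _] sKM.
have clR : closed R by rewrite eR; apply: closedI => //; exact: open_subgroup_closed.
have [[H0 fH0]|nofiber] := pselect (exists H, fiber K Om R M H); last first.
  by left; apply/seteqP; split => // H fH; apply: nofiber; exists H.
right; exists (to_hom K Om M H0), (of_hom Om R M H0).
split; first by move=> H fH; apply: to_hom_Hom.
split; first by move=> f hf; apply: of_hom_fiber.
split; first by move=> H fH; apply: to_homK.
split; first by move=> f hf; apply: of_homK.
by split => V oV; [apply: to_hom_continuous | apply: of_hom_continuous].
Qed.
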